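(* The twisted torus $L_\gamma$ is a product torus $S^1(r_1)\times S^1(r_2)\subset\mathbb{C}^2$ if and only if $\rho|H|=2$ identically on the torus.
   Context: Let $\gamma:\mathbb{R}/2\pi\mathbb{Z}\to\mathbb{C}\setminus\{0\}$ be a smooth regular simple closed curve written as $\gamma(\beta)=\rho(\beta)e^{if(\beta)}$ with $\rho>0$ smooth and $2\pi$-periodic and $f$ smooth with $f(\beta+2\pi)=f(\beta)+2k\pi$, $k\in\mathbb{Z}$. The twisted torus $L_\gamma$ is the image of $F(\alpha,\beta)=\frac{\rho(\beta)}{\sqrt2}\left(e^{i(f(\beta)+\alpha)},e^{i(f(\beta)-\alpha)}\right)$, $\alpha,\beta\in[0,2\pi)$, in $\mathbb{C}^2$ with the Euclidean metric. $H$ is its mean curvature vector ($g$-trace of the second fundamental form, no normalizing factor, $g$ the induced metric), and $\rho$ is regarded as the function $(\alpha,\beta)\mapsto\rho(\beta)$. For $r>0$, $S^1(r)=\{z\in\mathbb{C}:|z|=r\}$. *)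

From Stdlib Require Import Reals ZArith.
From Coquelicot Require Import Coquelicot.
Open Scope R_scope.

Definition smooth (h : R -> R) : Prop :=
  forall (n : nat) (x : R), ex_derive (Derive_n h n) x.

Definition gamma (rho f : R -> R) (b : R) : C :=
  (rho b * cos (f b), rho b * sin (f b)).

Definition regular_curve (rho f : R -> R) : Prop :=
  forall b, Derive (fun t => fst (gamma rho f t)) b <> 0 \/
            Derive (fun t => snd (gamma rho f t)) b <> 0.

Definition simple_curve (rho f : R -> R) : Prop :=
  forall b1 b2, 0 <= b1 < 2 * PI -> 0 <= b2 < 2 * PI ->
    gamma rho f b1 = gamma rho f b2 -> b1 = b2.

(** The parametrisation F(alpha,beta) = rho(beta)/sqrt 2 (e^{i(f+alpha)}, e^{i(f-alpha)})
    in C^2 = C * C. *)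
Definition Fpt (rho f : R -> R) (a b : R) : C * C :=
  ((rho b / sqrt 2 * cos (f b + a), rho b / sqrt 2 * sin (f b + a)),
   (rho b / sqrt 2 * cos (f b - a), rho b / sqrt 2 * sin (f b - a))).

Definition L_gamma (rho f : R -> R) (p : C * C) : Prop :=
  exists a b, 0 <= a < 2 * PI /\ 0 <= b < 2 * PI /\ p = Fpt rho f a b.

Definition S1 (r : R) (z : C) : Prop := Cmod z = r.
Definition product_torus (r1 r2 : R) (p : C * C) : Prop :=
  S1 r1 (fst p) /\ S1 r2 (snd p).

(** Real coordinates of C^2 = R^4 (Re z, Im z, Re w, Im w); vectors in R^4 are
    represented as functions nat -> R, only indices 0..3 being used. *)
Definition V4 := nat -> R.
Definition coord (p : C * C) (k : nat) : R :=
  match k with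
  | 0%nat => fst (fst p) | 1%nat => snd (fst p)
  | 2%nat => fst (snd p) | 3%nat => snd (snd p)
  | _ => 0 end.
Definition dot (u v : V4) : R :=
  u 0%nat * v 0%nat + u 1%nat * v 1%nat + u 2%nat * v 2%nat + u 3%nat * v 3%nat.

Section Geometry.
Variables (rho f : R -> R).

Definition Fc (a b : R) (k : nat) : R := coord (Fpt rho f a b) k.

Definition F_a (a b : R) : V4 := fun k => Derive (fun a' => Fc a' b k) a.
Definition F_b (a b : R) : V4 := fun k => Derive (fun b' => Fc a b' k) b.
Definition F_aa (a b : R) : V4 :=
  fun k => Derive (fun a' => Derive (fun a'' => Fc a'' b k) a') a.
Definition F_ab (a b : R) : V4 :=
  fun k => Derive (fun b' => Derive (fun a' => Fc a' b' k) a) b.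
Definition F_bb (a b : R) : V4 :=
  fun k => Derive (fun b' => Derive (fun b'' => Fc a b'' k) b') b.

Definition g11 a b := dot (F_a a b) (F_a a b).
Definition g12 a b := dot (F_a a b) (F_b a b).
Definition g22 a b := dot (F_b a b) (F_b a b).
Definition gdet a b := g11 a b * g22 a b - g12 a b ^ 2.
Definition gi11 a b := g22 a b / gdet a b.
Definition gi12 a b := - g12 a b / gdet a b.
Definition gi22 a b := g11 a b / gdet a b.

Definition nproj (a b : R) (v : V4) : V4 :=
  let c1 := gi11 a b * dot v (F_a a b) + gi12 a b * dot v (F_b a b) in
  let c2 := gi12 a b * dot v (F_a a b) + gi22 a b * dot v (F_b a b) in
  fun k => v k - (c1 * F_a a b k + c2 * F_b a b k).

(** Second fundamental form II(d_i, d_j) = (d_i d_j F)^perp, and the mean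
    curvature vector H = g^{ij} II_ij (trace, no normalising factor). *)
Definition meanH (a b : R) : V4 :=
  fun k => gi11 a b * nproj a b (F_aa a b) k
           + 2 * gi12 a b * nproj a b (F_ab a b) k
           + gi22 a b * nproj a b (F_bb a b) k.

Definition normH (a b : R) : R := sqrt (dot (meanH a b) (meanH a b)).

End Geometry.

From Stdlib Require Import Reals ZArith Lra Lia FunctionalExtensionality.
From Coquelicot Require Import Coquelicot.
Open Scope R_scope.

(* Differentiating F in a moving orthonormal frame gives |H| = |N| / |gamma'|^3 with
   N = 2 rho^2 f'^3 + 3 rho'^2 f' - rho rho'' f' + rho rho' f'' and
   |gamma'|^2 = rho'^2 + rho^2 f'^2.  For constant rho this gives rho |H| = 2, and
   L_gamma is then the product of two circles of radius rho / sqrt 2: f' never vanishes,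
   so the winding number k is nonzero and (f + a, f - a) reaches every pair of angles.
   Conversely, if rho |H| = 2 then by continuity rho N / |gamma'|^3 is a constant 2e,
   e = +-1.  Writing (rho'/rho, e f') = s (cos t, sin t), the identity
   rho N = 2e |gamma'|^3 says t' = 2 s (1 - sin t).  Then rho^2 (1 - sin t) is conserved,
   so if rho' does not vanish somewhere then sin t < 1 everywhere, and -tan(t/2 + pi/4)
   is a periodic function with derivative -2s < 0, which is absurd. *)

Ltac fold_eta := repeat match goal with
  | |- context [Derive (fun x : R => ?g x)] =>
      change (Derive (fun x : R => g x)) with (Derive g)
  end.

Lemma cos2_sin2 x : cos x ^ 2 + sin x ^ 2 = 1.
Proof. rewrite <- (sin2_cos2 x). unfold Rsqr. ring. Qed.

Lemma periodic_IZR (h : R -> R) T :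
  (forall x, h (x + T) = h x) -> forall (n : Z) x, h (x + IZR n * T) = h x.
Proof.
  intro Hp.
  assert (Hnat : forall (n : nat) x, h (x + INR n * T) = h x).
  { induction n as [|n IH]; intro x.
    - simpl. f_equal. ring.
    - rewrite S_INR. replace (x + (INR n + 1) * T) with (x + INR n * T + T) by ring.
      rewrite Hp. apply IH. }
  intros n x. destruct (Z_le_gt_dec 0 n) as [Hn | Hn].
  - rewrite <- (Z2Nat.id n Hn), <- INR_IZR_INZ. apply Hnat.
  - specialize (Hnat (Z.to_nat (- n)) (x + IZR n * T)).
    rewrite INR_IZR_INZ, Z2Nat.id, opp_IZR in Hnat by lia.
    rewrite <- Hnat. f_equal. ring.
Qed.

Lemma exists_shift_into_period x T : 0 < T -> exists n : Z, 0 <= x - IZR n * T < T.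
Proof.
  intro HT. destruct (archimed (x / T)) as [H1 H2].
  exists (up (x / T) - 1)%Z. rewrite minus_IZR.
  set (u := IZR (up (x / T))) in *.
  assert (x = x / T * T) by (field; lra).
  split; nra.
Qed.

Lemma cos_add_Z2PI x (n : Z) : cos (x + IZR n * (2 * PI)) = cos x.
Proof.
  apply periodic_IZR. intro y.
  replace (y + 2 * PI) with (y + 2 * INR 1 * PI) by (simpl; ring). apply cos_period.
Qed.

Lemma sin_add_Z2PI x (n : Z) : sin (x + IZR n * (2 * PI)) = sin x.
Proof.
  apply periodic_IZR. intro y.
  replace (y + 2 * PI) with (y + 2 * INR 1 * PI) by (simpl; ring). apply sin_period.
Qed.

Lemma Cmod_polar c t : 0 <= c -> Cmod (c * cos t, c * sin t) = c.
Proof.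
  intro Hc. unfold Cmod; simpl. apply sqrt_lem_1; [nra | assumption |].
  pose proof (cos2_sin2 t). nra.
Qed.

Lemma polar_repr (z : C) c : 0 < c -> Cmod z = c -> exists t, z = (c * cos t, c * sin t).
Proof.
  destruct z as [x y]. unfold Cmod; simpl. intros Hc Hm.
  assert (Hxy : x ^ 2 + y ^ 2 = c * c) by (rewrite <- Hm, sqrt_sqrt; nra).
  assert (Hx : -1 <= x / c <= 1).
  { split; apply (Rmult_le_reg_r c); try lra; unfold Rdiv;
      rewrite Rmult_assoc, Rinv_l by lra; nra. }
  assert (Hs : sqrt (1 - (x / c)²) = Rabs y / c).
  { apply sqrt_lem_1; unfold Rsqr.
    - nra.
    - apply Rdiv_le_0_compat; [apply Rabs_pos | lra].
    - replace (Rabs y / c * (Rabs y / c)) with (Rabs y * Rabs y / (c * c)) by (field; lra).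
      rewrite <- Rabs_mult, Rabs_right by nra.
      replace (1 - x / c * (x / c)) with ((c * c - x * x) / (c * c)) by (field; lra).
      f_equal. nra. }
  destruct (Rle_or_lt 0 y) as [Hy | Hy].
  - exists (acos (x / c)). rewrite cos_acos, sin_acos, Hs, Rabs_right by lra.
    f_equal; field; lra.
  - exists (- acos (x / c)). rewrite cos_neg, sin_neg, cos_acos, sin_acos, Hs, Rabs_left by lra.
    f_equal; field; lra.
Qed.

Lemma ex_derive_continuity_pt (g : R -> R) x : ex_derive g x -> continuity_pt g x.
Proof. intro H. apply continuity_pt_filterlim. exact (ex_derive_continuous g x H). Qed.

Lemma is_derive_0_const (g : R -> R) :
  (forall x, is_derive g x 0) -> forall x y, g x = g y.
Proof.
  intros H x y.
  destruct (MVT_gen g x y (fun _ => 0)) as [c [_ Hc]].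
  - intros t _. apply H.
  - intros t _. apply ex_derive_continuity_pt. exists 0. apply H.
  - lra.
Qed.

Lemma Derive_of_const (g : R -> R) c : (forall x, g x = c) -> forall x, Derive g x = 0.
Proof. intros Hc x. rewrite (Derive_ext g (fun _ => c)) by exact Hc. apply Derive_const. Qed.

Lemma continuous_abs_const (g : R -> R) c :
  continuity g -> 0 < c -> (forall x, Rabs (g x) = c) ->
  (forall x, g x = c) \/ (forall x, g x = - c).
Proof.
  intros Hg Hc Habs.
  assert (Hpm : forall x, g x = c \/ g x = - c).
  { intro x. specialize (Habs x). destruct (Rcase_abs (g x)).
    - rewrite Rabs_left in Habs by lra. right; lra.
    - rewrite Rabs_right in Habs by lra. left; lra. }
  assert (Hsame : forall x y, g x = c -> g y = - c -> False).
  { intros x y Hx Hy.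
    destruct (IVT_gen g x y 0 Hg) as [z [_ Hz]].
    - rewrite Hx, Hy, Rmin_right, Rmax_left by lra. lra.
    - specialize (Habs z). rewrite Hz, Rabs_R0 in Habs. lra. }
  destruct (Hpm 0) as [H0 | H0]; [left | right]; intro x;
    destruct (Hpm x) as [Hx | Hx]; auto; exfalso; eauto.
Qed.

Lemma Derive_shift (g : R -> R) c d :
  (forall x, ex_derive g x) -> (forall x, g (x + c) = g x + d) ->
  forall x, Derive g (x + c) = Derive g x.
Proof.
  intros Hd Hp x.
  transitivity (Derive (fun t => g (t + c)) x).
  { symmetry. apply is_derive_unique. auto_derive; [apply Hd | fold_eta; ring]. }
  rewrite (Derive_ext _ (fun t => g t + d)) by exact Hp.
  apply is_derive_unique. auto_derive; [apply Hd | fold_eta; ring].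
Qed.

Lemma quasi_periodic_onto_mod (f : R -> R) T (k : Z) :
  continuity f -> 0 < T -> k <> 0%Z -> (forall x, f (x + T) = f x + IZR k * T) ->
  forall y, exists (j : Z) b, 0 <= b < T /\ f b = y + IZR j * T.
Proof.
  intros Hc HT Hk Hp y.
  assert (HfT : f T = f 0 + IZR k * T) by (rewrite <- Hp; f_equal; ring).
  destruct (Z_lt_le_dec 0 k) as [Hk1 | Hk1].
  - assert (1 <= IZR k) by (apply IZR_le; lia).
    destruct (exists_shift_into_period (y - f 0) T HT) as [n Hn].
    destruct (IVT_gen f 0 T (y - IZR n * T) Hc) as [b [Hb Hfb]].
    + rewrite HfT, Rmin_left, Rmax_right by nra. nra.
    + rewrite Rmin_left, Rmax_right in Hb by lra.
      exists (- n)%Z, b. rewrite opp_IZR. split; [| lra].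
      split; [lra |]. destruct (Req_dec b T) as [-> | ]; [| lra].
      rewrite HfT in Hfb. nra.
  - assert (IZR k <= -1) by (apply IZR_le; lia).
    destruct (exists_shift_into_period (f 0 - y) T HT) as [n Hn].
    destruct (IVT_gen f 0 T (y + IZR n * T) Hc) as [b [Hb Hfb]].
    + rewrite HfT, Rmin_right, Rmax_left by nra. nra.
    + rewrite Rmin_left, Rmax_right in Hb by lra.
      exists n, b. split; [| lra].
      split; [lra |]. destruct (Req_dec b T) as [-> | ]; [| lra].
      rewrite HfT in Hfb. nra.
Qed.

(** * A rigidity lemma for a planar ODE *)

Section Rigidity.
Variables (r U V : R -> R) (T : R).
Hypothesis T_pos : 0 < T.
Hypothesis r_pos : forall x, 0 < r x.
Hypothesis U_d1 : forall x, ex_derive U x.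
Hypothesis V_d1 : forall x, ex_derive V x.
Hypothesis r_log_derive : forall x, is_derive r x (r x * U x).
Hypothesis UV_pos : forall x, 0 < U x ^ 2 + V x ^ 2.
Hypothesis U_periodic : forall x, U (x + T) = U x.
Hypothesis V_periodic : forall x, V (x + T) = V x.

Let s x := sqrt (U x ^ 2 + V x ^ 2).

(* Writing (U, V) = s (cos t, sin t), [turning] says t' = 2 (s - V): then r^2 (1 - sin t)
   is conserved and -tan(t/2 + pi/4) = - U / (s - V) decreases at rate 2 s. *)
Hypothesis turning :
  forall x, U x * Derive V x - Derive U x * V x = 2 * s x ^ 2 * (s x - V x).

Lemma s_sq x : s x * s x = U x ^ 2 + V x ^ 2.
Proof. apply sqrt_sqrt, Rlt_le, UV_pos. Qed.

Lemma s_pos x : 0 < s x.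
Proof. apply sqrt_lt_R0, UV_pos. Qed.

Lemma s_derive x : is_derive s x ((U x * Derive U x + V x * Derive V x) / s x).
Proof.
  pose proof (s_pos x). unfold s at 1.
  auto_derive.
  - repeat split; auto. pose proof (UV_pos x). nra.
  - fold_eta. replace (U x * (U x * 1) + V x * (V x * 1)) with (U x ^ 2 + V x ^ 2) by ring.
    fold (s x). field. lra.
Qed.

Lemma r_sq_gap_derive x : is_derive (fun y => r y ^ 2 * (s y - V y) / s y) x 0.
Proof.
  pose proof (s_pos x). pose proof (s_sq x) as Hs2. pose proof (turning x) as Hturn.
  assert (ex_derive r x) by (eexists; apply r_log_derive).
  assert (ex_derive s x) by (eexists; apply s_derive).
  auto_derive.
  - repeat split; auto. lra.
  - fold_eta.
    rewrite (is_derive_unique _ _ _ (r_log_derive x)), (is_derive_unique _ _ _ (s_derive x)).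
    transitivity (r x ^ 2 * (2 * U x * (s x - V x) * s x ^ 2 - Derive V x * (s x * s x)
                            + V x * (U x * Derive U x + V x * Derive V x)) / s x ^ 3).
    { field. lra. }
    rewrite Hs2.
    replace (2 * U x * (s x - V x) * s x ^ 2 - Derive V x * (U x ^ 2 + V x ^ 2)
             + V x * (U x * Derive U x + V x * Derive V x))
      with (U x * (2 * s x ^ 2 * (s x - V x) - (U x * Derive V x - Derive U x * V x)))
      by ring.
    rewrite Hturn. field. lra.
Qed.

Lemma s_gt_V x : U x <> 0 -> 0 < s x - V x.
Proof.
  intro HU. pose proof (s_sq x). pose proof (s_pos x).
  assert (0 < U x ^ 2) by (apply pow2_gt_0; assumption).
  nra.
Qed.

Lemma s_gt_V_everywhere x0 : U x0 <> 0 -> forall x, 0 < s x - V x.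
Proof.
  intros HU x. pose proof (s_pos x). pose proof (r_pos x).
  assert (Hq : 0 < r x ^ 2 * (s x - V x) / s x).
  { rewrite (is_derive_0_const _ r_sq_gap_derive x x0).
    pose proof (s_gt_V x0 HU). pose proof (s_pos x0). pose proof (r_pos x0).
    apply Rdiv_lt_0_compat; [apply Rmult_lt_0_compat; [apply pow_lt|] |]; assumption. }
  apply (Rmult_lt_reg_l (r x ^ 2 / s x)).
  - apply Rdiv_lt_0_compat; [apply pow_lt |]; assumption.
  - rewrite Rmult_0_r. replace (r x ^ 2 / s x * (s x - V x)) with (r x ^ 2 * (s x - V x) / s x)
      by (field; lra).
    exact Hq.
Qed.

Lemma tan_half_angle_derive x :
  s x - V x <> 0 -> is_derive (fun y => - U y / (s y - V y)) x (- 2 * s x).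
Proof.
  intro Hgap. pose proof (s_pos x). pose proof (s_sq x) as Hs2. pose proof (turning x) as Hturn.
  assert (ex_derive s x) by (eexists; apply s_derive).
  auto_derive.
  - repeat split; auto.
  - fold_eta. rewrite (is_derive_unique _ _ _ (s_derive x)).
    transitivity ((- Derive U x * (s x - V x) * s x + U x * (U x * Derive U x + V x * Derive V x)
                   - U x * Derive V x * s x) / (s x * (s x - V x) ^ 2)).
    { field. split; lra. }
    replace (- Derive U x * (s x - V x) * s x + U x * (U x * Derive U x + V x * Derive V x)
             - U x * Derive V x * s x)
      with (Derive U x * (U x ^ 2 + V x ^ 2 - s x * s x)
            - (s x - V x) * (U x * Derive V x - Derive U x * V x)) by ring.
    rewrite Hs2, Hturn. field. split; lra.
Qed.

Theorem log_derivative_vanishes x : U x = 0.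
Proof.
  destruct (Req_dec (U x) 0) as [| HU]; [assumption | exfalso].
  pose proof (s_gt_V_everywhere x HU) as Hgap.
  set (X := fun y => - U y / (s y - V y)).
  assert (HX : X (0 + T) = X 0) by (unfold X, s; rewrite U_periodic, V_periodic; reflexivity).
  destruct (MVT_gen X 0 T (fun y => - 2 * s y)) as [c [_ Hc]].
  - intros y _. apply tan_half_angle_derive. specialize (Hgap y). lra.
  - intros y _. apply ex_derive_continuity_pt. eexists. apply tan_half_angle_derive.
    specialize (Hgap y). lra.
  - rewrite Rplus_0_l in HX. rewrite HX in Hc. pose proof (s_pos c). nra.
Qed.

End Rigidity.

(** * The mean curvature of the twisted torus *)

(* Coordinates in the frame (e, ie, e', ie') with e = (e^{i th1}, e^{i th2}) / sqrt 2 and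
   e' = (e^{i th1}, -e^{i th2}) / sqrt 2. *)
Definition frame (th1 th2 x1 x2 x3 x4 : R) : V4 := fun k =>
  match k with
  | 0%nat => (x1 * cos th1 - x2 * sin th1 + x3 * cos th1 - x4 * sin th1) / sqrt 2
  | 1%nat => (x1 * sin th1 + x2 * cos th1 + x3 * sin th1 + x4 * cos th1) / sqrt 2
  | 2%nat => (x1 * cos th2 - x2 * sin th2 - x3 * cos th2 + x4 * sin th2) / sqrt 2
  | 3%nat => (x1 * sin th2 + x2 * cos th2 - x3 * sin th2 - x4 * cos th2) / sqrt 2
  | _ => 0
  end.

Lemma dot_frame th1 th2 x1 x2 x3 x4 y1 y2 y3 y4 :
  dot (frame th1 th2 x1 x2 x3 x4) (frame th1 th2 y1 y2 y3 y4)
  = x1 * y1 + x2 * y2 + x3 * y3 + x4 * y4.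
Proof.
  assert (Hsqrt2 : sqrt 2 * sqrt 2 = 2) by (apply sqrt_sqrt; lra).
  assert (sqrt 2 <> 0) by (intro E; rewrite E in Hsqrt2; lra).
  unfold dot, frame.
  transitivity ((x1 * y1 + x2 * y2 + x3 * y3 + x4 * y4)
                  * ((cos th1 ^ 2 + sin th1 ^ 2) + (cos th2 ^ 2 + sin th2 ^ 2))
                  / (sqrt 2 * sqrt 2)
                + (x1 * y3 + x3 * y1 + x2 * y4 + x4 * y2)
                  * ((cos th1 ^ 2 + sin th1 ^ 2) - (cos th2 ^ 2 + sin th2 ^ 2))
                  / (sqrt 2 * sqrt 2)).
  - field; assumption.
  - rewrite Hsqrt2, !cos2_sin2. field.
Qed.

Section FrameDerivatives.
Variables rho f : R -> R.
Hypothesis rho_d1 : forall x, ex_derive rho x.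
Hypothesis rho_d2 : forall x, ex_derive (Derive rho) x.
Hypothesis f_d1 : forall x, ex_derive f x.
Hypothesis f_d2 : forall x, ex_derive (Derive f) x.

Notation Frame a b := (frame (f b + a) (f b - a)).

Ltac solve_frame_derive :=
  intros [|[|[|[|k]]]]; unfold frame; simpl; apply is_derive_unique;
  try (auto_derive; [repeat split; auto|]); unfold Rminus, Rdiv; fold_eta; ring.

Lemma F_a_frame a b : F_a rho f a b = Frame a b 0 0 0 (rho b).
Proof.
  apply functional_extensionality; unfold F_a, Fc, Fpt, coord; solve_frame_derive.
Qed.

Lemma F_b_frame a b : F_b rho f a b = Frame a b (Derive rho b) (rho b * Derive f b) 0 0.
Proof.
  apply functional_extensionality; unfold F_b, Fc, Fpt, coord; solve_frame_derive.
Qed.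

Lemma F_aa_frame a b : F_aa rho f a b = Frame a b (- rho b) 0 0 0.
Proof.
  apply functional_extensionality; intro k; unfold F_aa.
  rewrite (Derive_ext _ (fun a' => Frame a' b 0 0 0 (rho b) k))
    by (intro t; exact (f_equal (fun v => v k) (F_a_frame t b))).
  revert k; solve_frame_derive.
Qed.

Lemma F_ab_frame a b :
  F_ab rho f a b = Frame a b 0 0 (- (rho b * Derive f b)) (Derive rho b).
Proof.
  apply functional_extensionality; intro k; unfold F_ab.
  rewrite (Derive_ext _ (fun b' => Frame a b' 0 0 0 (rho b') k))
    by (intro t; exact (f_equal (fun v => v k) (F_a_frame a t))).
  revert k; solve_frame_derive.
Qed.

Lemma F_bb_frame a b : F_bb rho f a b =
  Frame a b (Derive (Derive rho) b - rho b * Derive f b ^ 2)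
            (2 * Derive rho b * Derive f b + rho b * Derive (Derive f) b) 0 0.
Proof.
  apply functional_extensionality; intro k; unfold F_bb.
  rewrite (Derive_ext _ (fun b' => Frame a b' (Derive rho b') (rho b' * Derive f b') 0 0 k))
    by (intro t; exact (f_equal (fun v => v k) (F_b_frame a t))).
  revert k; solve_frame_derive.
Qed.

End FrameDerivatives.

Definition speed_sq (rho f : R -> R) (b : R) : R :=
  Derive rho b ^ 2 + rho b ^ 2 * Derive f b ^ 2.

Definition meanH_num (rho f : R -> R) (b : R) : R :=
  2 * rho b ^ 2 * Derive f b ^ 3 + 3 * Derive rho b ^ 2 * Derive f b
  - rho b * Derive (Derive rho) b * Derive f b + rho b * Derive rho b * Derive (Derive f) b.

Section MeanCurvature.
Variables rho f : R -> R.
Hypothesis rho_d1 : forall x, ex_derive rho x.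
Hypothesis rho_d2 : forall x, ex_derive (Derive rho) x.
Hypothesis f_d1 : forall x, ex_derive f x.
Hypothesis f_d2 : forall x, ex_derive (Derive f) x.

Lemma meanH_frame a b : rho b <> 0 -> 0 < speed_sq rho f b ->
  meanH rho f a b =
  frame (f b + a) (f b - a)
    (- rho b * Derive f b * meanH_num rho f b / speed_sq rho f b ^ 2)
    (Derive rho b * meanH_num rho f b / speed_sq rho f b ^ 2) 0 0.
Proof.
  intros Hr HS.
  assert (sqrt 2 <> 0) by (apply Rgt_not_eq, sqrt_lt_R0; lra).
  unfold meanH, nproj, gi11, gi12, gi22, gdet, g11, g12, g22.
  rewrite (F_a_frame rho f), (F_b_frame rho f), (F_aa_frame rho f), (F_ab_frame rho f),
    (F_bb_frame rho f) by assumption.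
  rewrite !dot_frame.
  unfold speed_sq, meanH_num in *.
  set (r := rho b) in *; set (p := Derive rho b) in *; set (q := Derive (Derive rho) b) in *;
  set (w := Derive f b) in *; set (z := Derive (Derive f) b) in *.
  apply functional_extensionality; intros [|[|[|[|k]]]]; unfold frame; simpl;
    field; repeat split; try assumption; nra.
Qed.

Lemma normH_formula a b : rho b <> 0 -> 0 < speed_sq rho f b ->
  normH rho f a b =
  Rabs (meanH_num rho f b) / (speed_sq rho f b * sqrt (speed_sq rho f b)).
Proof.
  intros Hr HS. unfold normH. rewrite meanH_frame, dot_frame by assumption.
  set (N := meanH_num rho f b) in *. set (S := speed_sq rho f b) in *.
  assert (HsqS : sqrt S * sqrt S = S) by (apply sqrt_sqrt; lra).
  assert (0 < sqrt S) by (apply sqrt_lt_R0; lra).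
  apply sqrt_lem_1.
  - nra.
  - apply Rdiv_le_0_compat; [apply Rabs_pos | apply Rmult_lt_0_compat; lra].
  - transitivity (N * N / (S * S * S)).
    + replace (Rabs N / (S * sqrt S) * (Rabs N / (S * sqrt S)))
        with (Rabs N * Rabs N / (S * S * (sqrt S * sqrt S))) by (field; lra).
      rewrite HsqS, <- Rabs_mult, Rabs_right by nra. reflexivity.
    + transitivity (N * N * (Derive rho b ^ 2 + rho b ^ 2 * Derive f b ^ 2) / S ^ 4).
      * fold (speed_sq rho f b); fold S. field. lra.
      * field. lra.
Qed.

End MeanCurvature.

Definition rhoH_signed (rho f : R -> R) (b : R) : R :=
  rho b * meanH_num rho f b / (speed_sq rho f b * sqrt (speed_sq rho f b)).

Lemma rho_normH (rho f : R -> R) a b :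
  (forall x, ex_derive rho x) -> (forall x, ex_derive (Derive rho) x) ->
  (forall x, ex_derive f x) -> (forall x, ex_derive (Derive f) x) ->
  0 < rho b -> 0 < speed_sq rho f b ->
  rho b * normH rho f a b = Rabs (rhoH_signed rho f b).
Proof.
  intros Hr1 Hr2 Hf1 Hf2 Hr HS.
  assert (0 < sqrt (speed_sq rho f b)) by (apply sqrt_lt_R0; lra).
  rewrite normH_formula by (auto; lra).
  unfold rhoH_signed, Rdiv.
  rewrite !Rabs_mult, Rabs_inv, (Rabs_right (rho b)), (Rabs_right (_ * _)) by nra.
  ring.
Qed.

Lemma speed_sq_pos (rho f : R -> R) :
  (forall x, ex_derive rho x) -> (forall x, ex_derive f x) ->
  regular_curve rho f -> forall b, 0 < speed_sq rho f b.
Proof.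
  intros Hr1 Hf1 Hreg b.
  assert (E1 : Derive (fun t => fst (gamma rho f t)) b
               = Derive rho b * cos (f b) - rho b * Derive f b * sin (f b)).
  { apply is_derive_unique; unfold gamma; simpl; auto_derive; auto; fold_eta; ring. }
  assert (E2 : Derive (fun t => snd (gamma rho f t)) b
               = Derive rho b * sin (f b) + rho b * Derive f b * cos (f b)).
  { apply is_derive_unique; unfold gamma; simpl; auto_derive; auto; fold_eta; ring. }
  unfold speed_sq.
  destruct (Rle_lt_or_eq_dec 0 (Derive rho b ^ 2 + rho b ^ 2 * Derive f b ^ 2))
    as [|E]; [nra | assumption |].
  assert (Hp : Derive rho b = 0) by nra.
  assert (Hw : rho b * Derive f b = 0) by nra.
  exfalso; destruct (Hreg b) as [H | H]; apply H;
    [rewrite E1 | rewrite E2]; rewrite Hp, Hw; ring.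
Qed.

Lemma rhoH_signed_const_radius (rho f : R -> R) (R0 : R) b :
  (forall x, rho x = R0) -> 0 < R0 -> Derive f b <> 0 ->
  Rabs (rhoH_signed rho f b) = 2.
Proof.
  intros Hc HR0 Hw.
  pose proof (Derive_of_const rho R0 Hc) as Hd.
  pose proof (Derive_of_const _ 0 Hd b) as Hdd.
  unfold rhoH_signed, meanH_num, speed_sq. rewrite Hdd, !Hd, !Hc.
  set (w := Derive f b) in *.
  assert (0 < Rabs w) by (apply Rabs_pos_lt; assumption).
  assert (Hw2 : w ^ 2 = Rabs w * Rabs w) by (rewrite <- Rabs_mult, Rabs_right; nra).
  replace (sqrt (0 ^ 2 + R0 ^ 2 * w ^ 2)) with (R0 * Rabs w).
  2:{ symmetry; apply sqrt_lem_1; nra. }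
  replace (R0 * (2 * R0 ^ 2 * w ^ 3 + 3 * 0 ^ 2 * w - R0 * 0 * w + R0 * 0 * Derive (Derive f) b)
           / ((0 ^ 2 + R0 ^ 2 * w ^ 2) * (R0 * Rabs w))) with (2 * (w / Rabs w))
    by (replace (w ^ 3) with (w * w ^ 2) by ring; rewrite Hw2; field; lra).
  rewrite Rabs_mult, Rabs_div, Rabs_Rabsolu, Rabs_right by lra.
  field; lra.
Qed.

Lemma Derive_neq0_of_const_radius (rho f : R -> R) R0 :
  (forall x, rho x = R0) -> (forall x, ex_derive f x) -> regular_curve rho f ->
  forall x, Derive f x <> 0.
Proof.
  intros Hc Hf Hreg x Hx.
  assert (Hr : forall y, ex_derive rho y).
  { intro y. apply (ex_derive_ext (fun _ => R0)); [intro t; symmetry; apply Hc |].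
    apply ex_derive_const. }
  pose proof (speed_sq_pos rho f Hr Hf Hreg x) as HS.
  unfold speed_sq in HS. rewrite (Derive_of_const rho R0 Hc), Hx in HS. lra.
Qed.

(** * Twisted tori with rho |H| = 2 *)

(* r, p, q, w, z stand for rho, rho', rho'', f', f'' and s for |gamma'|. *)
Lemma turning_of_rhoH_signed e r p q w z s :
  e * e = 1 -> 0 < r -> s * s = p ^ 2 + r ^ 2 * w ^ 2 ->
  r * (2 * r ^ 2 * w ^ 3 + 3 * p ^ 2 * w - r * q * w + r * p * z)
    = 2 * e * ((p ^ 2 + r ^ 2 * w ^ 2) * s) ->
  p / r * (e * z) - (q * r - p ^ 2) / r ^ 2 * (e * w)
    = 2 * (s / r) ^ 2 * (s / r - e * w).
Proof.
  intros He Hr Hs HN.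
  transitivity (e * (r * p * z - r * q * w + p ^ 2 * w) / r ^ 2); [field; lra |].
  transitivity (2 * (s * s) * s / r ^ 3 - 2 * e * w * (s * s) / r ^ 2); [| field; lra].
  rewrite Hs.
  replace (2 * (p ^ 2 + r ^ 2 * w ^ 2) * s)
    with (e * (r * (2 * r ^ 2 * w ^ 3 + 3 * p ^ 2 * w - r * q * w + r * p * z)))
    by (rewrite HN; replace (e * (2 * e * ((p ^ 2 + r ^ 2 * w ^ 2) * s)))
          with (2 * (e * e) * ((p ^ 2 + r ^ 2 * w ^ 2) * s)) by ring; rewrite He; ring).
  field. lra.
Qed.

Section RigidityOfTwistedTori.
Variables (rho f : R -> R) (k : Z).
Hypothesis rho_smooth : smooth rho.
Hypothesis f_smooth : smooth f.
Hypothesis rho_pos : forall x, 0 < rho x.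
Hypothesis rho_periodic : forall x, rho (x + 2 * PI) = rho x.
Hypothesis f_quasi_periodic : forall x, f (x + 2 * PI) = f x + 2 * IZR k * PI.
Hypothesis regular : regular_curve rho f.

Let rho_d1 : forall x, ex_derive rho x := rho_smooth 0%nat.
Let rho_d2 : forall x, ex_derive (Derive rho) x := rho_smooth 1%nat.
Let rho_d3 : forall x, ex_derive (Derive (Derive rho)) x := rho_smooth 2%nat.
Let f_d1 : forall x, ex_derive f x := f_smooth 0%nat.
Let f_d2 : forall x, ex_derive (Derive f) x := f_smooth 1%nat.
Let f_d3 : forall x, ex_derive (Derive (Derive f)) x := f_smooth 2%nat.
Let speed_pos : forall x, 0 < speed_sq rho f x := speed_sq_pos rho f rho_d1 f_d1 regular.

Let dlog_rho x := Derive rho x / rho x.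
Let signed_df (e x : R) := e * Derive f x.

Lemma rhoH_signed_continuous : continuity (rhoH_signed rho f).
Proof.
  intro x. apply ex_derive_continuity_pt.
  pose proof (speed_pos x). pose proof (sqrt_lt_R0 _ (speed_pos x)).
  unfold rhoH_signed, meanH_num, speed_sq in *.
  auto_derive. repeat split; auto; try lra.
  apply Rgt_not_eq, Rmult_lt_0_compat; assumption.
Qed.

Lemma rhoH_signed_const_sign :
  (forall a b, rho b * normH rho f a b = 2) ->
  exists e, e * e = 1 /\ forall b, rhoH_signed rho f b = 2 * e.
Proof.
  intro H2.
  assert (Habs : forall b, Rabs (rhoH_signed rho f b) = 2)
    by (intro b; rewrite <- (rho_normH rho f 0 b); auto).
  destruct (continuous_abs_const _ 2 rhoH_signed_continuous ltac:(lra) Habs) as [Hc | Hc];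
    [exists 1 | exists (-1)]; (split; [ring | intro b; rewrite Hc; ring]).
Qed.

Lemma dlog_rho_signed_df_sq e x : e * e = 1 ->
  dlog_rho x ^ 2 + signed_df e x ^ 2 = speed_sq rho f x / rho x ^ 2.
Proof.
  intro He. unfold dlog_rho, signed_df, speed_sq. pose proof (rho_pos x).
  replace ((e * Derive f x) ^ 2) with ((e * e) * Derive f x ^ 2) by ring.
  rewrite He. field. lra.
Qed.

Lemma turning_of_const_sign e : e * e = 1 -> (forall b, rhoH_signed rho f b = 2 * e) ->
  forall x,
  dlog_rho x * Derive (signed_df e) x - Derive dlog_rho x * signed_df e x
  = 2 * sqrt (dlog_rho x ^ 2 + signed_df e x ^ 2) ^ 2
      * (sqrt (dlog_rho x ^ 2 + signed_df e x ^ 2) - signed_df e x).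
Proof.
  intros He Hsign x. pose proof (rho_pos x). pose proof (speed_pos x).
  assert (HdU : Derive dlog_rho x
                = (Derive (Derive rho) x * rho x - Derive rho x ^ 2) / rho x ^ 2).
  { apply is_derive_unique. unfold dlog_rho. auto_derive; [repeat split; auto; lra |].
    fold_eta. field. lra. }
  assert (HdV : Derive (signed_df e) x = e * Derive (Derive f) x) by apply Derive_scal.
  assert (Hs : sqrt (dlog_rho x ^ 2 + signed_df e x ^ 2) = sqrt (speed_sq rho f x) / rho x).
  { rewrite dlog_rho_signed_df_sq, sqrt_div_alt, sqrt_pow2 by (try apply pow_lt; lra).
    reflexivity. }
  rewrite HdU, HdV, Hs. unfold dlog_rho, signed_df.
  apply turning_of_rhoH_signed; auto.
  - apply sqrt_sqrt, Rlt_le, speed_pos.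
  - fold (speed_sq rho f x). fold (meanH_num rho f x).
    rewrite <- (Hsign x). unfold rhoH_signed.
    pose proof (sqrt_lt_R0 _ (speed_pos x)). field. split; lra.
Qed.

Lemma rho_derive_vanishes :
  (forall a b, rho b * normH rho f a b = 2) -> forall x, Derive rho x = 0.
Proof.
  intro H2. destruct (rhoH_signed_const_sign H2) as [e [He Hsign]].
  assert (HU : forall x, dlog_rho x = 0).
  { apply (log_derivative_vanishes rho dlog_rho (signed_df e) (2 * PI)).
    - pose proof PI_RGT_0. lra.
    - exact rho_pos.
    - intro x. pose proof (rho_pos x). unfold dlog_rho. auto_derive. repeat split; auto. lra.
    - intro x. unfold signed_df. auto_derive. auto.
    - intro x. pose proof (rho_pos x). unfold dlog_rho.
      replace (rho x * (Derive rho x / rho x)) with (Derive rho x) by (field; lra).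
      apply Derive_correct, rho_d1.
    - intro x. rewrite dlog_rho_signed_df_sq by exact He.
      pose proof (rho_pos x). pose proof (speed_pos x).
      apply Rdiv_lt_0_compat; [| apply pow_lt]; assumption.
    - intro x. unfold dlog_rho. rewrite rho_periodic, (Derive_shift rho (2 * PI) 0); auto.
      intro y. rewrite rho_periodic. ring.
    - intro x. unfold signed_df. rewrite (Derive_shift f (2 * PI) (2 * IZR k * PI)); auto.
    - exact (turning_of_const_sign e He Hsign). }
  intro x. pose proof (rho_pos x). specialize (HU x). unfold dlog_rho in HU.
  replace (Derive rho x) with (Derive rho x / rho x * rho x) by (field; lra).
  rewrite HU. ring.
Qed.

Lemma rho_normH_two_iff_const_radius :
  (forall a b, rho b * normH rho f a b = 2) <-> exists R0, forall x, rho x = R0.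
Proof.
  split.
  - intro H2. exists (rho 0). intro x.
    apply is_derive_0_const. intro y. rewrite <- (rho_derive_vanishes H2 y).
    apply Derive_correct, rho_d1.
  - intros [R0 Hc] a b. pose proof (rho_pos 0) as HR0. rewrite Hc in HR0.
    rewrite rho_normH by auto.
    apply (rhoH_signed_const_radius rho f R0); auto.
    exact (Derive_neq0_of_const_radius rho f R0 Hc f_d1 regular b).
Qed.

End RigidityOfTwistedTori.

(** * Twisted tori that are product tori *)

Lemma const_radius_of_product_torus (rho f : R -> R) r1 r2 :
  (forall b, 0 < rho b) -> (forall x, rho (x + 2 * PI) = rho x) ->
  (forall p, L_gamma rho f p <-> product_torus r1 r2 p) ->
  forall x, rho x = sqrt 2 * r1.
Proof.
  intros Hpos Hper Heq x.
  pose proof PI_RGT_0. assert (0 < sqrt 2) by (apply sqrt_lt_R0; lra).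
  destruct (exists_shift_into_period x (2 * PI)) as [n Hn]; [lra |].
  set (b := x - IZR n * (2 * PI)) in *.
  assert (Hb : rho x = rho b)
    by (rewrite <- (periodic_IZR rho _ Hper n b); unfold b; f_equal; ring).
  assert (HL : L_gamma rho f (Fpt rho f 0 b)) by (exists 0, b; repeat split; lra).
  apply Heq in HL. destruct HL as [HL _]. unfold S1, Fpt in HL; simpl in HL.
  rewrite Cmod_polar in HL by (pose proof (Hpos b); apply Rlt_le, Rdiv_lt_0_compat; lra).
  rewrite Hb, <- HL. field. lra.
Qed.

Lemma winding_nonzero (f : R -> R) (k : Z) :
  (forall x, ex_derive f x) -> (forall x, Derive f x <> 0) ->
  (forall x, f (x + 2 * PI) = f x + 2 * IZR k * PI) -> k <> 0%Z.
Proof.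
  intros Hd Hn Hp ->. pose proof PI_RGT_0.
  destruct (MVT_gen f 0 (2 * PI) (Derive f)) as [c [_ Hc]].
  - intros x _. apply Derive_correct, Hd.
  - intros x _. apply ex_derive_continuity_pt, Hd.
  - specialize (Hp 0). rewrite Rplus_0_l in Hp. rewrite Hp in Hc.
    apply (Hn c). nra.
Qed.

Lemma L_gamma_const_radius (rho f : R -> R) (k : Z) R0 :
  (forall x, rho x = R0) -> 0 < R0 ->
  (forall x, ex_derive f x) -> (forall x, Derive f x <> 0) ->
  (forall x, f (x + 2 * PI) = f x + 2 * IZR k * PI) ->
  forall p, L_gamma rho f p <-> product_torus (R0 / sqrt 2) (R0 / sqrt 2) p.
Proof.
  intros Hc HR0 Hd Hn Hp [z1 z2].
  pose proof PI_RGT_0. assert (0 < sqrt 2) by (apply sqrt_lt_R0; lra).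
  set (c := R0 / sqrt 2). assert (Hcpos : 0 < c) by (apply Rdiv_lt_0_compat; lra).
  split.
  - intros [a [b [_ [_ Hab]]]]. unfold Fpt in Hab. rewrite Hc in Hab. fold c in Hab.
    injection Hab as -> ->. split; apply Cmod_polar; lra.
  - intros [Hz1 Hz2].
    destruct (polar_repr z1 c Hcpos Hz1) as [t1 ->].
    destruct (polar_repr z2 c Hcpos Hz2) as [t2 ->].
    assert (Hfc : continuity f) by (intro x; apply ex_derive_continuity_pt, Hd).
    destruct (quasi_periodic_onto_mod f (2 * PI) k Hfc ltac:(lra)
                (winding_nonzero f k Hd Hn Hp) ltac:(intro x; rewrite Hp; ring)
                ((t1 + t2) / 2)) as [j [b [Hb Hfb]]].
    destruct (exists_shift_into_period (t1 - f b) (2 * PI)) as [n Hn']; [lra |].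
    exists (t1 - f b - IZR n * (2 * PI)), b. split; [lra | split; [assumption |]].
    unfold Fpt. rewrite Hc. fold c.
    replace (f b + (t1 - f b - IZR n * (2 * PI))) with (t1 + IZR (- n) * (2 * PI))
      by (rewrite opp_IZR; ring).
    replace (f b - (t1 - f b - IZR n * (2 * PI))) with (t2 + IZR (2 * j + n) * (2 * PI))
      by (rewrite plus_IZR, mult_IZR, Hfb; field).
    rewrite !cos_add_Z2PI, !sin_add_Z2PI. reflexivity.
Qed.

Lemma product_torus_iff_const_radius (rho f : R -> R) (k : Z) :
  (forall x, ex_derive f x) -> (forall b, 0 < rho b) -> (forall x, rho (x + 2 * PI) = rho x) ->
  (forall x, f (x + 2 * PI) = f x + 2 * IZR k * PI) -> regular_curve rho f ->
  (exists r1 r2 : R, 0 < r1 /\ 0 < r2 /\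
     forall p : C * C, L_gamma rho f p <-> product_torus r1 r2 p)
  <-> exists R0, forall x, rho x = R0.
Proof.
  intros Hd Hpos Hper Hp Hreg. split.
  - intros [r1 [r2 [_ [_ Heq]]]]. exists (sqrt 2 * r1).
    exact (const_radius_of_product_torus rho f r1 _ Hpos Hper Heq).
  - intros [R0 Hc]. pose proof (Hpos 0) as HR0. rewrite Hc in HR0.
    assert (0 < R0 / sqrt 2) by (apply Rdiv_lt_0_compat, sqrt_lt_R0; lra).
    exists (R0 / sqrt 2), (R0 / sqrt 2). split; [assumption | split; [assumption |]].
    apply (L_gamma_const_radius rho f k); auto.
    exact (Derive_neq0_of_const_radius rho f R0 Hc Hd Hreg).
Qed.

Theorem mainTheorem7 (rho f : R -> R) (k : Z) :
  smooth rho -> smooth f ->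
  (forall b, 0 < rho b) ->
  (forall b, rho (b + 2 * PI) = rho b) ->
  (forall b, f (b + 2 * PI) = f b + 2 * IZR k * PI) ->
  regular_curve rho f ->
  simple_curve rho f ->
  ((exists r1 r2 : R, 0 < r1 /\ 0 < r2 /\
      forall p : C * C, L_gamma rho f p <-> product_torus r1 r2 p)
   <-> (forall a b : R, rho b * normH rho f a b = 2)).
Proof.
  intros Hsr Hsf Hpos Hpr Hpf Hreg _.
  exact (iff_trans (product_torus_iff_const_radius rho f k (Hsf 0%nat) Hpos Hpr Hpf Hreg)
           (iff_sym (rho_normH_two_iff_const_radius rho f k Hsr Hsf Hpos Hpr Hpf Hreg))).
Qed.
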